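(* For all $n\ge0$, \[ p_n^2=\delta_{n,0}+p_{n-2}^2+p_{n-3}^2+2\sum_{l=5}^n c_{l-5}p_{n-l}^2 . \]
   Context: The Narayana's cows numbers $c_n$ are defined by $c_n=\delta_{n,0}+c_{n-1}+c_{n-3}$ for $n\ge0$, $c_n=0$ for $n<0$. The Padovan numbers $p_n$ are defined by $p_n=\delta_{n,0}+p_{n-2}+p_{n-3}$ for $n\ge0$, $p_n=0$ for $n<0$. $\delta_{i,j}$ is $1$ if $i=j$ and $0$ otherwise. Empty sums are $0$. *)

From mathcomp Require Import all_boot ssralg ssrint.
Set Implicit Arguments. Unset Strict Implicit. Unset Printing Implicit Defensive.

(* Narayana's cows numbers for nonnegative indices:
   c_n = delta_{n,0} + c_{n-1} + c_{n-3}, with c_n = 0 for n < 0.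
   Unfolding: c_0 = 1, c_1 = c_0 = 1, c_2 = c_1 = 1, c_{n+3} = c_{n+2} + c_n. *)
Fixpoint cows (n : nat) : nat :=
  match n with
  | 0 => 1
  | 1 => 1
  | 2 => 1
  | ((m.+1 as k).+1 as j).+1 => cows j + cows m
  end.

(* Padovan numbers for nonnegative indices:
   p_n = delta_{n,0} + p_{n-2} + p_{n-3}, with p_n = 0 for n < 0.
   Unfolding: p_0 = 1, p_1 = 0, p_2 = p_0 = 1, p_{n+3} = p_{n+1} + p_n. *)
Fixpoint padovan (n : nat) : nat :=
  match n with
  | 0 => 1
  | 1 => 0
  | 2 => 1
  | ((m.+1 as k).+1 as j).+1 => padovan k + padovan m
  end.

Definition cz (n : int) : nat :=
  match n with Posz k => cows k | Negz _ => 0 end.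
Definition pz (n : int) : nat :=
  match n with Posz k => padovan k | Negz _ => 0 end.

(* The squares of the Padovan numbers satisfy the linear recurrence with
   characteristic polynomial (x^3 - x - 1)(x^3 - x^2 - 1), the second factor
   being that of Narayana's cows sequence.  Convolving with the cows numbers
   therefore absorbs that factor: F = c * p^2 satisfies
   F_(m+3) = p_(m+3)^2 + F_(m+2) + F_m, and the identity
   p_(m+5)^2 = p_(m+3)^2 + p_(m+2)^2 + 2 F_m follows by induction with step 3,
   the remaining terms cancelling by the recurrence for the squares. *)

From mathcomp Require Import all_boot ssralg ssrint.
From mathcomp Require Import zify.
Import GRing.Theory.

Lemma padovanSSS m : padovan m.+3 = padovan m.+1 + padovan m.
Proof. by case: m. Qed.

Lemma cowsSSS m : cows m.+3 = cows m.+2 + cows m.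
Proof. by case: m. Qed.

Definition padovan_sq k := padovan k ^ 2.

Lemma padovan_sq_rec m :
  padovan_sq m.+4.+2 + padovan_sq m.+2 + padovan_sq m =
  padovan_sq m.+4.+1 + padovan_sq m.+4 + padovan_sq m.+3 + padovan_sq m.+1.
Proof.
rewrite /padovan_sq !padovanSSS.
move: (padovan m) (padovan m.+1) (padovan m.+2) => a b c.
nia.
Qed.

Definition cows_conv (q : nat -> nat) m := \sum_(k < m.+1) cows k * q (m - k).

Lemma cows_convSS q m :
  cows_conv q m.+2 = q m.+2 + q m.+1 + \sum_(k < m.+1) cows k.+2 * q (m - k).
Proof.
rewrite /cows_conv !big_ord_recl /= !mul1n subn0 addnA.
by congr (_ + _); apply: eq_bigr => i _; rewrite !lift0.
Qed.

Lemma cows_convSSS q m :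
  cows_conv q m.+3 = q m.+3 + cows_conv q m.+2 + cows_conv q m.
Proof.
have -> : cows_conv q m.+3 =
          q m.+3 + q m.+2 + q m.+1 + \sum_(k < m.+1) cows k.+3 * q (m - k).
  rewrite /cows_conv !big_ord_recl /= !mul1n subn0 !addnA.
  by congr (_ + _); apply: eq_bigr => i _; rewrite !lift0.
under eq_bigr do rewrite cowsSSS mulnDl.
by rewrite big_split cows_convSS /cows_conv !addnA.
Qed.

Lemma padovan_sq_cows_conv m :
  padovan_sq m.+4.+1 = padovan_sq m.+3 + padovan_sq m.+2 + 2 * cows_conv padovan_sq m.
Proof.
pose P k := padovan_sq k.+4.+1 = padovan_sq k.+3 + padovan_sq k.+2
                              + 2 * cows_conv padovan_sq k.
suff [] : [/\ P m, P m.+1 & P m.+2] by [].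
elim: m => [|m [IH0 IH1 IH2]].
  by split; rewrite /P /cows_conv !big_ord_recl big_ord0.
split=> //; rewrite /P cows_convSSS.
have := padovan_sq_rec m.+2; rewrite /P in IH0 IH2; lia.
Qed.

Lemma shifted_sum_cows_conv m :
  \sum_(5 <= l < m.+4.+2) cz (l%:Z - 5) * pz (m.+4.+1%:Z - l%:Z) ^ 2 =
  cows_conv padovan_sq m.
Proof.
rewrite -{1}(add0n 5) big_addn big_mkord.
apply: eq_bigr => i _.
rewrite PoszD addrK subzn; last by have := ltn_ord i; lia.
by have -> : m.+4.+1 - (i + 5) = m - i by lia.
Qed.

Theorem mainTheorem13 (n : nat) :
  (pz n%:Z ^ 2 =
   ((n == 0)%N : nat) + pz (n%:Z - 2) ^ 2 + pz (n%:Z - 3) ^ 2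
   + 2 * \sum_(5 <= l < n.+1) cz (l%:Z - 5) * pz (n%:Z - l%:Z) ^ 2)%N.
Proof.
case: n => [|[|[|[|[|m]]]]]; try by rewrite big_geq.
by rewrite shifted_sum_cows_conv [LHS]padovan_sq_cows_conv.
Qed.
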